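(* Let $G$ be one of $\mathrm{GL}_n$, $\mathrm{SO}_{2n+1}$, $\mathrm{SO}_{2n}$, $\mathrm{Sp}_{2n}$ (excluding $\mathrm{SO}_{2n+1}$ when $p=2$) with natural module $V$, let $P$ be a proper parabolic subgroup with unipotent radical $Q$ and natural flag $0=W_0<W_1<\dots<W_\ell=V$. Let $g\in Q$, $r\ge1$, and let $V_r$ be a subspace spanned by $r$ Jordan chains of $g$ belonging to $r$ distinct Jordan blocks. Then $\dim V_r\le\sum_{i=1}^\ell\min\{r,\dim W_i/W_{i-1}\}$, with equality if and only if $\dim(V_r\cap W_j)=\sum_{i=1}^j\min\{r,\dim W_i/W_{i-1}\}$ for all $j\ge1$. In particular, if $\lambda_1(g)\ge\lambda_2(g)\ge\cdots$ are the Jordan block sizes of $g$, then $\sum_{i=1}^r\lambda_i(g)\le\sum_{i=1}^\ell\min\{r,\dim W_i/W_{i-1}\}$ for all $r\ge1$.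
   Context: Setup: a subspace $W$ of the natural module is totally singular if the quadratic form (hence the bilinear form $\beta$) vanishes on it; for $\mathrm{GL}_n$ every subspace counts as totally singular. A flag $W_0\le\dots\le W_\ell$ is totally singular if each $W_i$ is totally singular or equals $W^\perp$ for some totally singular $W$. Write a Levi factor of $P$ as $\mathrm{GL}_{n_1}\cdots\mathrm{GL}_{n_s}\mathrm{Cl}_m$ ($m\ge 0$; $\mathrm{Cl}_m$ a classical group of the same type as $G$ of rank $m$, absent for $\mathrm{GL}_n$ where $m=0$). A natural flag for $P$ is a totally singular flag of length $\ell$ whose stabilizer is $P$, where $\ell=s$ if $G=\mathrm{GL}_n$, $\ell=2s$ if $m=0$ and $G\in\{\mathrm{SO}_{2n},\mathrm{Sp}_{2n}\}$, and $\ell=2s+1$ if $m\ge1$ or $G=\mathrm{SO}_{2n+1}$. The unipotent radical $Q$ is the set of elements of $P$ acting trivially on every factor $W_i/W_{i-1}$. A Jordan chain of length $x$ for $g$ is $v_1,\dots,v_x$ with $(g-1)v_1=0$, $(g-1)v_i=v_{i-1}$. *)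

From HB Require Import structures.
From mathcomp Require Import all_boot all_order all_algebra.
Set Implicit Arguments. Unset Strict Implicit. Unset Printing Implicit Defensive.
Import GRing.Theory.
Local Open Scope ring_scope.

(* Vectors of the natural module V = F^N are row vectors 'rV[F]_N; a linear
   map g : 'M_N acts on the right (v |-> v *m g).  Subspaces of V are
   represented by matrices through their row space (mxalgebra, %MS). *)

Inductive ctype := TGL | TSO_odd | TSO_even | TSp.

Section Classical.
Variables (F : fieldType) (N : nat).

Definition qf (A : 'M[F]_N) (v : 'rV[F]_N) : F := (v *m A *m v^T) 0 0.

(* Gram matrix of the bilinear form beta(u,v) = u B v^T:
   for Sp it is A itself, for SO it is the polar form A + A^T of Q,
   for GL there is no form. *)
Definition bform (t : ctype) (A : 'M[F]_N) : 'M[F]_N :=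
  match t with
  | TGL => 0
  | TSp => A
  | _ => A + A^T
  end.

Definition classical_form (t : ctype) (A : 'M[F]_N) : Prop :=
  match t with
  | TGL => (0 < N)%N
  | TSp => ~~ odd N /\ A^T = - A /\ (forall i, A i i = 0) /\ A \in unitmx
  | TSO_even => ~~ odd N /\ (A + A^T) \in unitmx
  | TSO_odd => odd N /\ ~~ (2%N \in [pchar F]) /\ (A + A^T) \in unitmx
  end.

Definition in_G (t : ctype) (A : 'M[F]_N) (g : 'M[F]_N) : Prop :=
  match t with
  | TGL => g \in unitmx
  | TSp => g *m A *m g^T = A
  | _ => (forall v, qf A (v *m g) = qf A v) /\ \det g = 1
  end.

Definition totally_singular (t : ctype) (A : 'M[F]_N) (W : 'M[F]_N) : Prop :=
  match t with
  | TGL => True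
  | TSp => W *m A *m W^T = 0
  | _ => forall v : 'rV[F]_N, (v <= W)%MS -> qf A v = 0
  end.

Definition perp (t : ctype) (A : 'M[F]_N) (W : 'M[F]_N) : 'M[F]_N :=
  kermx ((W *m bform t A)^T).

(* (W_0, ..., W_l) is the natural flag of a proper parabolic subgroup P of G:
   0 = W_0 < W_1 < ... < W_l = V, and for the form types the flag has the shape
   0 < W_1 < ... < W_s (<) W_s^perp < ... < W_1^perp < V with W_1,..,W_s
   totally singular, l = 2s (W_s = W_s^perp) or l = 2s+1; properness means
   l >= 2 for GL and s >= 1 otherwise.  P is the stabilizer in G of this flag. *)
Definition proper_natural_flag (t : ctype) (A : 'M[F]_N) (l : nat)
    (W : nat -> 'M[F]_N) : Prop :=
  (W 0%N == (0 : 'M[F]_N))%MS /\ (W l == 1%:M)%MS /\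
  (forall i, (i < l)%N -> (W i < W i.+1)%MS) /\
  match t with
  | TGL => (2 <= l)%N
  | _ => exists s, (1 <= s)%N /\ (l = s.*2 \/ l = s.*2.+1) /\
           (forall i, (i <= s)%N -> totally_singular t A (W i)) /\
           (forall i, (i <= s)%N -> (W (l - i)%N == perp t A (W i))%MS)
  end.

Definition in_parabolic (t : ctype) (A : 'M[F]_N) (l : nat)
    (W : nat -> 'M[F]_N) (g : 'M[F]_N) : Prop :=
  in_G t A g /\ (forall i, (i <= l)%N -> (W i *m g == W i)%MS).

Definition in_unipotent_radical (t : ctype) (A : 'M[F]_N) (l : nat)
    (W : nat -> 'M[F]_N) (g : 'M[F]_N) : Prop :=
  in_parabolic t A l W g /\
  (forall i, (1 <= i <= l)%N -> (W i *m (g - 1%:M) <= W i.-1)%MS).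

Definition span_mx (s : seq 'rV[F]_N) : 'M[F]_(size s, N) :=
  \matrix_(i < size s) nth 0 s i.

Definition jordan_chain (g : 'M[F]_N) (c : seq 'rV[F]_N) : Prop :=
  forall i, (i < size c)%N ->
    nth 0 c i *m (g - 1%:M) = (if i is j.+1 then nth 0 c j else 0).

(* A Jordan decomposition of V for g: a list of (nonempty) Jordan chains whose
   concatenation is a basis of V; the Jordan blocks of g are the spans of
   these chains and the Jordan block sizes are their lengths. *)
Definition jordan_basis (g : 'M[F]_N) (bs : seq (seq 'rV[F]_N)) : Prop :=
  (forall b, b \in bs -> jordan_chain g b /\ (0 < size b)%N) /\
  row_free (span_mx (flatten bs)) /\ row_full (span_mx (flatten bs)).

(* Jordan block sizes lambda_1 >= lambda_2 >= ... (padded by zeros). *)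
Definition jordan_sizes (bs : seq (seq 'rV[F]_N)) : seq nat :=
  sort geq (map size bs).

Definition flag_bound (W : nat -> 'M[F]_N) (r j : nat) : nat :=
  (\sum_(1 <= i < j.+1) minn r (\rank (W i) - \rank (W i.-1)))%N.

End Classical.

From HB Require Import structures.
From mathcomp Require Import all_boot all_order all_algebra.
From mathcomp Require Import zify.
Set Implicit Arguments. Unset Strict Implicit. Unset Printing Implicit Defensive.
Import GRing.Theory.
Local Open Scope ring_scope.

(* Put u := g - 1.  Since g lies in Q, u maps each W_j into W_(j-1), and a space
   V spanned by r Jordan chains is u-stable with dim V / V u <= r, as the last
   vectors of the chains generate V modulo V u.  Hence V_j := V :&: W_j grows
   by at most min(r, dim W_j / W_(j-1)) from V_(j-1): the bound by the flag is
   clear, and the bound by r holds because V_j u <= V_(j-1) while the kernel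
   of u on V_j lies in the kernel of u on V, of dimension at most r.  Summing
   gives the inequality, and the sum is attained only if every partial sum is.
   For the Jordan sizes, apply this to the span of the r longest blocks. *)

Section SpanMx.
Variables (F : fieldType) (N : nat).
Implicit Types (s t : seq 'rV[F]_N).

Lemma mem_span_mx s x : x \in s -> (x <= span_mx s)%MS.
Proof.
move=> xs; have lt : (index x s < size s)%N by rewrite index_mem.
have -> : x = row (Ordinal lt) (span_mx s) by rewrite rowK /= nth_index.
exact: row_sub.
Qed.

Lemma span_mx_subP s m (M : 'M[F]_(m, N)) :
  (forall x, x \in s -> (x <= M)%MS) -> (span_mx s <= M)%MS.
Proof. by move=> sM; apply/row_subP => i; rewrite rowK; apply/sM/mem_nth. Qed.

Lemma span_mx_perm s t : perm_eq s t -> (span_mx s == span_mx t)%MS.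
Proof.
move=> st; apply/andP; split; apply: span_mx_subP => x xs; apply: mem_span_mx.
  by rewrite -(perm_mem st).
by rewrite (perm_mem st).
Qed.

Lemma span_mx_cat s t : (span_mx (s ++ t) <= span_mx s + span_mx t)%MS.
Proof.
apply: span_mx_subP => x; rewrite mem_cat => /orP[xs|xt].
  exact: submx_trans (mem_span_mx xs) (addsmxSl _ _).
exact: submx_trans (mem_span_mx xt) (addsmxSr _ _).
Qed.

Lemma rank_span_mx_catl s t :
  \rank (span_mx (s ++ t)) = size (s ++ t) -> \rank (span_mx s) = size s.
Proof.
move=> free_st; apply/eqP; rewrite eqn_leq rank_leq_row.
rewrite -(leq_add2r (size t)) -size_cat -free_st.
apply: leq_trans (mxrankS (span_mx_cat s t)) _.
apply: leq_trans (mxrank_adds_leqif _ _).1 _.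
by rewrite leq_add2l rank_leq_row.
Qed.

End SpanMx.

Section JordanChains.
Variables (F : fieldType) (N : nat) (g : 'M[F]_N).
Local Notation u := (g - 1%:M).

Lemma jordan_chain_stable s : jordan_chain g s ->
  (span_mx s *m u <= span_mx s)%MS.
Proof.
move=> hs; apply/row_subP => i; rewrite row_mul rowK hs //.
case: (nat_of_ord i) (ltn_ord i) => [|j] lt; first exact: sub0mx.
exact/mem_span_mx/mem_nth/ltnW.
Qed.

Lemma jordan_chain_span_last s : jordan_chain g s ->
  (span_mx s <= span_mx s *m u + nth 0 s (size s).-1)%MS.
Proof.
move=> hs; apply/row_subP => i; rewrite rowK.
have [lt|ge] := ltnP i.+1 (size s).
  apply: submx_trans (addsmxSl _ _).
  have <- : row (Ordinal lt) (span_mx s) *m u = nth 0 s i by rewrite rowK hs.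
  by rewrite -row_mul row_sub.
have -> : nat_of_ord i = (size s).-1 by have := ltn_ord i; lia.
exact: addsmxSr.
Qed.

Variables (m : nat) (c : 'I_m -> seq 'rV[F]_N).
Hypothesis chain_c : forall k, jordan_chain g (c k).
Let V := (\sum_(k < m) <<span_mx (c k)>>)%MS.

Lemma sum_jordan_chains_stable : stablemx V u.
Proof.
rewrite /V (sumsmxMr _ _ u); apply/sumsmx_subP => k _.
rewrite (eqmxMr u (genmxE _)).
apply: submx_trans (jordan_chain_stable (@chain_c k)) _.
by apply: (sumsmx_sup k) => //; rewrite genmxE.
Qed.

Lemma rank_sum_jordan_chains : (\rank V <= \rank (V *m u) + m)%N.
Proof.
pose L := \matrix_(k < m) nth 0 (c k) (size (c k)).-1.
have V_last : (V <= V *m u + L)%MS.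
  apply/sumsmx_subP => k _; rewrite genmxE.
  apply: submx_trans (jordan_chain_span_last (@chain_c k)) _.
  apply: addsmxS; first by apply/submxMr/(sumsmx_sup k) => //; rewrite genmxE.
  by have := row_sub k L; rewrite rowK.
apply: leq_trans (mxrankS V_last) _.
apply: leq_trans (mxrank_adds_leqif _ _).1 _.
by rewrite leq_add2l rank_leq_row.
Qed.

End JordanChains.

Section FlagFiltration.
Variables (F : fieldType) (N : nat) (W : nat -> 'M[F]_N) (l r : nat).
Variables (u V : 'M[F]_N).
Hypotheses (W0 : (W 0 == (0 : 'M[F]_N))%MS) (Wl : (W l == 1%:M)%MS).
Hypothesis W_mono : forall i, (i < l)%N -> (W i <= W i.+1)%MS.
Hypothesis u_lowers : forall i, (1 <= i <= l)%N -> (W i *m u <= W i.-1)%MS.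
Hypotheses (V_stable : stablemx V u) (V_gen : (\rank V <= \rank (V *m u) + r)%N).

Let d j := \rank (V :&: W j)%MS.

Lemma rank_cap_flag_step j : (1 <= j <= l)%N ->
  (d j <= d j.-1 + minn r (\rank (W j) - \rank (W j.-1)))%N.
Proof.
case: j => // j /andP[_ jl]; rewrite /d /=.
have Wj := W_mono jl; set Vj := (V :&: W j.+1)%MS.
have by_r : (\rank Vj <= \rank (V :&: W j) + r)%N.
  have := mxrank_mul_ker Vj u; have := mxrank_mul_ker V u.
  have ker_le : (\rank (Vj :&: kermx u) <= \rank (V :&: kermx u))%N.
    exact/mxrankS/capmxS/submx_refl/capmxSl.
  have im_le : (\rank (Vj *m u) <= \rank (V :&: W j))%N.
    apply: mxrankS; rewrite sub_capmx (submx_trans _ V_stable) ?submxMr ?capmxSl //=.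
    exact: submx_trans (submxMr u (capmxSr V _)) (@u_lowers j.+1 jl).
  lia.
have by_flag : (\rank Vj + \rank (W j) <= \rank (W j.+1) + \rank (V :&: W j))%N.
  have := mxrank_sum_cap Vj (W j).
  have sum_le : (\rank (Vj + W j) <= \rank (W j.+1))%N.
    by apply: mxrankS; rewrite addsmx_sub Wj capmxSr.
  have cap_eq : \rank (Vj :&: W j) = \rank (V :&: W j).
    apply/eqmx_rank/andP; split; first exact/capmxS/submx_refl/capmxSl.
    by rewrite !sub_capmx capmxSl capmxSr (submx_trans (capmxSr _ _) Wj).
  lia.
have := mxrankS Wj; lia.
Qed.

Lemma rank_cap_flag_telescope j k : (j <= k <= l)%N ->
  (d k + flag_bound W r j <= d j + flag_bound W r k)%N.
Proof.
move=> /andP[]; elim: k => [|k IH]; first by rewrite leqn0 => /eqP ->.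
rewrite leq_eqVlt => /orP[/eqP -> //|jk kl].
have tele := IH jk (ltnW kl).
have /= := rank_cap_flag_step (j := k.+1); rewrite kl => /(_ isT) step.
rewrite /flag_bound in tele *.
by rewrite [X in (_ <= _ + X)%N]big_nat_recr //=; lia.
Qed.

Lemma rank_cap_flag0 : d 0 = 0%N.
Proof.
apply/eqP; rewrite -leqn0; apply: leq_trans (mxrankS (capmxSr V (W 0))) _.
by rewrite (eqmx_rank W0) mxrank0.
Qed.

Lemma rank_cap_flag_last : d l = \rank V.
Proof. by apply/eqmx_rank/andP; rewrite capmxSl sub_capmx submx_refl (eqmxP Wl) submx1. Qed.

Lemma rank_cap_flag_le j : (j <= l)%N -> (d j <= flag_bound W r j)%N.
Proof.
move=> jl; have := rank_cap_flag_telescope (j := 0) (k := j).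
by rewrite jl rank_cap_flag0 /flag_bound big_geq //; lia.
Qed.

Lemma rank_le_flag_bound : (\rank V <= flag_bound W r l)%N.
Proof. by rewrite -rank_cap_flag_last rank_cap_flag_le. Qed.

Lemma rank_eq_flag_boundP : (0 < l)%N ->
  \rank V = flag_bound W r l <->
  (forall j, (1 <= j <= l)%N -> \rank (V :&: W j)%MS = flag_bound W r j).
Proof.
move=> l_gt0; split=> [eqV j /andP[_ jl] | eq_cap]; last first.
  by rewrite -rank_cap_flag_last; apply: eq_cap; rewrite l_gt0 leqnn.
have := rank_cap_flag_telescope (j := j) (k := l); rewrite jl leqnn.
by have := rank_cap_flag_le jl; rewrite rank_cap_flag_last eqV /d; lia.
Qed.

End FlagFiltration.

Lemma proper_natural_flag_gt0 (F : fieldType) (N : nat) (t : ctype)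
    (A : 'M[F]_N) (l : nat) (W : nat -> 'M[F]_N) :
  proper_natural_flag t A l W -> (0 < l)%N.
Proof.
case: t => -[_ [_ [_ shape]]] //=; first by apply: leq_trans shape.
all: by case: shape => s [s1 [[->|->] _]]; rewrite -addnn; lia.
Qed.

Lemma sum_nth_take (r : nat) (s : seq nat) :
  (\sum_(i < r) nth 0%N s i)%N = sumn (take r s).
Proof.
elim: r s => [|r IH] [|x s] /=; rewrite ?big_ord0 // big_ord_recl /=.
  by rewrite big1 // => i _; rewrite nth_nil.
by rewrite IH.
Qed.

Lemma jordan_sizes_sum_span (F : fieldType) (N : nat) (g : 'M[F]_N)
    (bs : seq (seq 'rV[F]_N)) (r : nat) :
  jordan_basis g bs ->
  exists m (c : 'I_m -> seq 'rV[F]_N),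
    [/\ (m <= r)%N, forall k, jordan_chain g (c k) &
      (\sum_(i < r) nth 0 (jordan_sizes bs) i
         <= \rank (\sum_(k < m) <<span_mx (c k)>>)%MS)%N].
Proof.
move=> [chains [free _]].
set bs' := sort (relpre size geq) bs.
have bs'_perm : perm_eq bs' bs by rewrite perm_sort.
set X := take r bs'.
exists (size X), (nth [::] X); split.
- by rewrite size_take_min geq_minl.
- move=> k; have : nth [::] X k \in bs.
    by rewrite -(perm_mem bs'_perm) (mem_take (mem_nth _ (ltn_ord k))).
  by case/chains.
rewrite /jordan_sizes sort_map sum_nth_take -map_take -/bs' -/X -size_flatten.
have free_X : \rank (span_mx (flatten X)) = size (flatten X).
  apply: (@rank_span_mx_catl _ _ _ (flatten (drop r bs'))).
  rewrite -flatten_cat cat_take_drop.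
  rewrite (eqmx_rank (span_mx_perm (perm_flatten bs'_perm))).
  by rewrite (perm_size (perm_flatten bs'_perm)); apply/eqP.
rewrite -free_X; apply: mxrankS; apply: span_mx_subP => x /flattenP[b bX xb].
apply: submx_trans (mem_span_mx xb) _.
have lt : (index b X < size X)%N by rewrite index_mem.
by apply: (sumsmx_sup (Ordinal lt)) => //; rewrite genmxE /= nth_index.
Qed.

Theorem mainTheorem6 (F : closedFieldType) (t : ctype) (N : nat)
    (A : 'M[F]_N) (hG : classical_form t A)
    (l : nat) (W : nat -> 'M[F]_N) (hW : proper_natural_flag t A l W)
    (g : 'M[F]_N) (hg : in_unipotent_radical t A l W g)
    (bs : seq (seq 'rV[F]_N)) (hbs : jordan_basis g bs) :
  (forall (r : nat) (c : 'I_r -> seq 'rV[F]_N) (blk : 'I_r -> nat),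
     (1 <= r)%N ->
     injective blk ->
     (forall k, (blk k < size bs)%N) ->
     (forall k, jordan_chain g (c k)) ->
     (forall k, (span_mx (c k) <= span_mx (nth [::] bs (blk k)))%MS) ->
     let Vr := (\sum_(k < r) <<span_mx (c k)>>)%MS in
     (\rank Vr <= flag_bound W r l)%N /\
     (\rank Vr = flag_bound W r l <->
        (forall j, (1 <= j <= l)%N ->
           \rank (Vr :&: W j)%MS = flag_bound W r j))) /\
  (forall r : nat, (1 <= r)%N ->
     (\sum_(i < r) nth 0 (jordan_sizes bs) i <= flag_bound W r l)%N).
Proof.
have l_gt0 := proper_natural_flag_gt0 hW.
have [W0 [Wl [W_lt _]]] := hW.
have W_mono i : (i < l)%N -> (W i <= W i.+1)%MS by move/W_lt/ltmxW.
have u_lowers := hg.2.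
split=> [r c _ _ _ _ chain_c _ Vr | r _].
  have V_stable := sum_jordan_chains_stable chain_c.
  have V_gen := rank_sum_jordan_chains chain_c.
  split; first exact: (rank_le_flag_bound W0 Wl W_mono u_lowers V_stable V_gen).
  exact: (rank_eq_flag_boundP W0 Wl W_mono u_lowers V_stable V_gen).
have [m [c [m_le chain_c sizes_le]]] := jordan_sizes_sum_span r hbs.
apply: leq_trans sizes_le (rank_le_flag_bound W0 Wl W_mono u_lowers _ _).
- exact: sum_jordan_chains_stable.
- apply: leq_trans (rank_sum_jordan_chains chain_c) _; by rewrite leq_add2l.
Qed.
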